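(* (Amortized complexity.) Over $N$ slots, the total work of the event-driven credit-gate scheduler described in the context is $O(N+G)+O\big((A+G)\log U\big)$, where $U$ is the number of UEs, $A$ is the total number of queue-becomes-non-empty events and $G=\sum_{n}G_n$ is the total number of new-grant events ($G_n$ being the number of new grants in slot $n$).
   Context: A base station serves $U$ UEs over slots $n=0,\dots,N-1$. Each UE $u$ has backlog $Q_u$, credit $C_u$, per-slot allowance $\Delta C_u>0$ and lower credit bound $lo_u<0$. The event-driven scheduler keeps (i) a circular eligible list of UEs (backlogged, free HARQ process, credit $\ge 0$), used for round-robin selection with $O(1)$ insert/remove/advance, and (ii) a min-heap of UEs in credit deficit keyed by wake-up slot, each heap operation costing $O(\log U)$. In each slot $n$: (1) while the heap minimum key equals $n$, extract that UE, set its credit to $0$, and add it to the eligible list if its queue is non-empty and it has a free HARQ process; (2) schedule HARQ retransmissions first (this determines the number of new grants allowed, at most $K$); (3) select up to that many UEs from the eligible list by round-robin; (4) for each granted UE compute the debit in $O(1)$ (the granted TBS for CBS-DT, or $\min\{\mathrm{TBS},Q\}$ for CBS-PU), subtract it from the credit and clamp at $lo_u$; if the queue is now empty, reset positive credit to $0$ and remove the UE from the eligible list; otherwise, if the credit is negative, remove it from the eligible list and insert it in the heap with key $n+\lceil -C_u/\Delta C_u\rceil$. When a UE's queue becomes non-empty, it is added to the eligible list if its credit is non-negative, and otherwise (if indebted) inserted into the heap with its wake-up key. Work counts the operations of this credit-gate logic (heap and list operations, credit bookkeeping, round-robin selection). *)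

(* Operational model of the event-driven credit-gate scheduler
   with an explicit work counter (cost model: list ops / credit bookkeeping /
   heap-min peek / RR step = 1 unit; each heap insert/extract = hcost U units,
   i.e. O(log U)). *)
From HB Require Import structures.
From mathcomp Require Import all_boot all_order all_algebra.
Set Implicit Arguments. Unset Strict Implicit. Unset Printing Implicit Defensive.
Import Order.TTheory GRing.Theory Num.Theory.
Local Open Scope ring_scope.

Inductive debit_rule := CBS_DT | CBS_PU.

(* state: queues Q_u, credits C_u, circular eligible list (head = next RR
   position), heap of (wake-up key, UE), accumulated work, number of
   queue-becomes-non-empty events A, number of new grants G. *)
Record sstate (U : nat) := SState {
  st_q : 'I_U -> nat;
  st_c : 'I_U -> rat;
  st_el : seq 'I_U;
  st_hp : seq (nat * 'I_U);
  st_work : nat;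
  st_A : nat;
  st_G : nat }.

(* heap operation cost: height of a binary heap on U elements *)
Definition hcost (U : nat) : nat := (trunc_log 2 U).+1.

Section Sched.
Variable U : nat.
Variable rule : debit_rule.
Variable K : nat.                          (* max grants per slot *)
Variables (dC lo : 'I_U -> rat).          (* allowance Delta C_u > 0, bound lo_u < 0 *)
Variable harq : nat -> 'I_U -> bool.       (* UE has a free HARQ process in slot n *)
Variable arr : nat -> seq ('I_U * nat).    (* arrivals (UE, bytes) at start of slot n *)
Variable retx : nat -> nat.                (* number of HARQ retransmissions in slot n *)
Variable tbs : nat -> 'I_U -> nat.         (* TBS granted to UE u in slot n *)

Definition updf {T : Type} (f : 'I_U -> T) (u : 'I_U) (x : T) : 'I_U -> T :=
  fun v => if v == u then x else f v.

Definition wake_key (n : nat) (u : 'I_U) (c : rat) : nat :=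
  (n + `|Num.ceil (- c / dC u)|)%N.

Definition arrive (n : nat) (s : sstate U) (ub : 'I_U * nat) : sstate U :=
  let: (u, b) := ub in
  let: SState q c el hp w a g := s in
  if (q u == 0)%N && (0 < b)%N then
    (* queue-becomes-non-empty event *)
    if 0 <= c u then SState (updf q u b) c (rcons el u) hp (w + 2)%N a.+1 g
    else SState (updf q u b) c el ((wake_key n u (c u), u) :: hp)
                (w + 1 + hcost U)%N a.+1 g
  else SState (updf q u (q u + b)%N) c el hp w a g.

Definition hmin (h : seq (nat * 'I_U)) : option (nat * 'I_U) :=
  foldr (fun e o => match o with
                    | None => Some e
                    | Some e' => if (e.1 <= e'.1)%N then Some e else Some e'
                    end) None h.

Fixpoint wake_loop (n fuel : nat) (s : sstate U) : sstate U :=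
  let: SState q c el hp w a g := s in
  match fuel with
  | 0 => s
  | f.+1 =>
    match hmin hp with
    | Some (k, u) =>
      if k == n then
        let hp' := rem (k, u) hp in
        let c' := updf c u 0 in
        if (q u != 0)%N && harq n u then
          wake_loop n f (SState q c' (rcons el u) hp' (w + 3 + hcost U)%N a g)
        else wake_loop n f (SState q c' el hp' (w + 2 + hcost U)%N a g)
      else SState q c el hp w.+1 a g
    | None => SState q c el hp w.+1 a g
    end
  end.

Definition grant (n : nat) (s : sstate U) (u : 'I_U) : sstate U :=
  let: SState q c el hp w a g := s in
  let t := tbs n u in
  let d : nat := match rule with CBS_DT => t | CBS_PU => minn t (q u) end in
  let cu := Num.max (lo u) (c u - d%:R) in
  let qu := (q u - minn t (q u))%N in
  let q' := updf q u qu in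
  if qu == 0%N then
    SState q' (updf c u (if 0 < cu then 0 else cu)) (filter (predC1 u) el) hp
           (w + 2)%N a g
  else if cu < 0 then
    SState q' (updf c u cu) (filter (predC1 u) el)
           ((wake_key n u cu, u) :: hp) (w + 3 + hcost U)%N a g
  else SState q' (updf c u cu) el hp w.+1 a g.

(* steps (2)-(4): retransmissions fix the number of allowed new grants,
   round-robin selection from the eligible list, then debits *)
Definition select_grant (n : nat) (s : sstate U) : sstate U :=
  let: SState q c el hp w a g := s in
  let k := (K - retx n)%N in
  let sel := take k el in
  let el' := drop k el ++ sel in
  foldl (grant n) (SState q c el' hp (w + size sel + 1)%N a (g + size sel)%N) sel.

Definition slot (n : nat) (s : sstate U) : sstate U :=
  let s1 := foldl (arrive n) s (arr n) in
  let s2 := wake_loop n (size (st_hp s1)).+1 s1 in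
  select_grant n s2.

Definition init_state (C0 : 'I_U -> rat) : sstate U :=
  SState (fun _ => 0%N) C0 [::] [::] 0%N 0%N 0%N.

Fixpoint run (N : nat) (s : sstate U) : sstate U :=
  match N with
  | 0 => s
  | m.+1 => slot m (run m s)
  end.

End Sched.

(* Let L := hcost U and give every heap entry a prepaid
   charge of 3 + L, so that the potential work + (3 + L) * |heap| pays for
   the later extraction of that entry.  Then an arrival raises the potential
   by at most 4 + 2L, a grant by at most 7 + 2L (its round-robin step, its
   debit, and possibly one prepaid heap insertion), an extraction not at all,
   and each slot adds 2 units of overhead.  Hence
   work <= 2N + (4 + 2L) A + (7 + 2L) G, and L <= 2 log U since U > 1. *)
From mathcomp Require Import all_boot all_order all_algebra.
From mathcomp Require Import zify.
Set Implicit Arguments. Unset Strict Implicit. Unset Printing Implicit Defensive.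
Import Order.TTheory GRing.Theory Num.Theory.

Lemma hmin_in (U : nat) (h : seq (nat * 'I_U)) e : hmin h = Some e -> e \in h.
Proof.
elim: h e => [|x h IH] e //=.
case E: (hmin h) => [e'|] /=; last by case=> <-; rewrite mem_head.
case: ifP => _ [<-]; first by rewrite mem_head.
by rewrite in_cons (IH _ E) orbT.
Qed.

Section Amortization.
Variable U : nat.
Variable rule : debit_rule.
Variable K : nat.
Variables (dC lo : 'I_U -> rat).
Variable harq : nat -> 'I_U -> bool.
Variable arr : nat -> seq ('I_U * nat).
Variable retx : nat -> nat.
Variable tbs : nat -> 'I_U -> nat.

Local Notation L := (hcost U).

Definition potential (s : sstate U) : nat :=
  st_work s + (3 + L) * size (st_hp s).

Definition within_budget (k : nat) (s : sstate U) : Prop :=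
  (potential s <= k + (4 + 2 * L) * st_A s + (7 + 2 * L) * st_G s)%N.

Lemma arrive_budget k n s ub :
  within_budget k s -> within_budget k (arrive dC n s ub).
Proof.
case: ub s => u b [q c el hp w a g]; rewrite /within_budget /potential /=.
by case: ifP => _ //=; case: ifP => _ /=; lia.
Qed.

Lemma arrivals_budget k n s l :
  within_budget k s -> within_budget k (foldl (arrive dC n) s l).
Proof. by elim: l s => [|x l IH] s //= budget; apply/IH/arrive_budget. Qed.

Lemma wake_loop_budget k n f s :
  within_budget k s -> within_budget k.+1 (wake_loop harq n f s).
Proof.
elim: f s => [|f IH] [q c el hp w a g]; rewrite /within_budget /potential /=.
  lia.
case E: (hmin hp) => [[k' u]|] /=; last lia.
case: eqP => _ /=; last lia.
have size_hp := perm_size (perm_to_rem (hmin_in E)).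
move=> budget; case: ifP => _; apply: IH; move: budget;
  rewrite /within_budget /potential /= size_hp /=; lia.
Qed.

Lemma grant_potential n s u :
  let s' := grant rule dC lo tbs n s u in
  [/\ (potential s' <= potential s + (6 + 2 * L))%N,
      st_A s' = st_A s & st_G s' = st_G s].
Proof.
case: s => q c el hp w a g; rewrite /potential /=.
by case: ifP => _ /=; [|case: ifP => _ /=]; split => //; lia.
Qed.

Lemma grants_potential n s l :
  let s' := foldl (grant rule dC lo tbs n) s l in
  [/\ (potential s' <= potential s + (6 + 2 * L) * size l)%N,
      st_A s' = st_A s & st_G s' = st_G s].
Proof.
elim: l s => [|x l IH] s /=; first by split => //; lia.
have [grants_le -> ->] := IH (grant rule dC lo tbs n s x).
have [grant_le -> ->] := grant_potential n s x.
by split => //; lia.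
Qed.

Lemma select_grant_budget k n s :
  within_budget k s -> within_budget k.+1 (select_grant rule K dC lo retx tbs n s).
Proof.
case: s => q c el hp w a g budget; rewrite /within_budget /select_grant.
set s0 := (X in foldl _ X _).
have [grants_le -> ->] := grants_potential n s0 (take (K - retx n) el).
move: budget grants_le; rewrite /within_budget /potential /s0 /=; lia.
Qed.

Lemma run_budget N C0 :
  within_budget (2 * N) (run rule K dC lo harq arr retx tbs N (init_state C0)).
Proof.
elim: N => [|N IH] /=; first by rewrite /within_budget /potential /=; lia.
rewrite /slot mulnS add2n.
by apply/select_grant_budget/wake_loop_budget/arrivals_budget.
Qed.

End Amortization.

Theorem theorem2 :
  exists c : nat,
  forall (U : nat) (rule : debit_rule) (K : nat) (dC lo C0 : 'I_U -> rat)
         (harq : nat -> 'I_U -> bool) (arr : nat -> seq ('I_U * nat))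
         (retx : nat -> nat) (tbs : nat -> 'I_U -> nat) (N : nat),
    (1 < U)%N ->
    (forall u, (0 < dC u)%R) ->
    (forall u, (lo u < 0)%R) ->
    let s := run rule K dC lo harq arr retx tbs N (init_state C0) in
    (st_work s <= c * (N + st_G s) + c * (st_A s + st_G s) * trunc_log 2 U)%N.
Proof.
exists 8 => U rule K dC lo C0 harq arr retx tbs N U_gt1 _ _ /=.
set s := run _ _ _ _ _ _ _ _ _ _.
have := run_budget rule K dC lo harq arr retx tbs N C0.
have log_gt0 : (0 < trunc_log 2 U)%N by rewrite trunc_log_gt0.
rewrite /within_budget /potential /hcost -/s; nia.
Qed.
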